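(* Let $B$ and $H$ be differentiation bases in $\mathbb{R}^2$ with $B\subset H$. Then the union of at most countably many $R_{B,H}$-sets is a $W_{B,H}$-set, and the union of at most countably many $R^{+}_{B,H}$-sets is a $W^{+}_{B,H}$-set.
   Context: A differentiation basis in $\mathbb{R}^n$ is a mapping $B$ assigning to each $x\in\mathbb{R}^n$ a family $B(x)$ of bounded measurable sets of positive Lebesgue measure containing $x$, such that there is a sequence $R_k\in B(x)$ with $\operatorname{diam}R_k\to 0$. $B\subset H$ means $B(x)\subset H(x)$ for all $x$. For $f\in L(\mathbb{R}^n)$ the upper and lower derivatives of $\int f$ at $x$ with respect to $B$ are $\overline{D}_B(\int f,x)=\limsup_{R\in B(x),\,\operatorname{diam}R\to0}\frac{1}{|R|}\int_R f$ and $\underline{D}_B(\int f,x)=\liminf_{R\in B(x),\,\operatorname{diam}R\to0}\frac{1}{|R|}\int_R f$; $B$ differentiates $\int f$ if both equal $f(x)$ for almost every $x$. $F_B$ denotes the class of $f\in L(\mathbb{R}^n)$ whose integrals are differentiated by $B$. $\Gamma_2$ is the set of rotations of $\mathbb{R}^2$ about the origin. For $\gamma\in\Gamma_2$ the $\gamma$-rotated basis is $B(\gamma)(x)=\{x+\gamma(R-x): R\in B(x)\}$. For $E\subset\Gamma_2$: $E$ is a $W_{B,H}$-set (resp. $W^{+}_{B,H}$-set) if there exists $f\in L(\mathbb{R}^2)$ (resp. $f\in L(\mathbb{R}^2)$ with $f\ge 0$) such that (1) $f\notin F_{B(\gamma)}$ for every $\gamma\in E$ and (2) $f\in F_{H(\gamma)}$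 for every $\gamma\notin E$. $E$ is an $R_{B,H}$-set (resp. $R^{+}_{B,H}$-set) if there exists $f\in L(\mathbb{R}^2)$ (resp. $f\in L(\mathbb{R}^2)$ with $f\ge0$) such that (1) for every $\gamma\in E$, $\overline{D}_{B(\gamma)}(\int f,x)=\infty$ for almost every $x\in\mathbb{R}^2$, and (2) $f\in F_{H(\gamma)}$ for every $\gamma\notin E$. *)

From HB Require Import structures.
From mathcomp Require Import all_boot all_order all_algebra.
From mathcomp Require Import all_classical all_reals all_analysis.
Set Implicit Arguments. Unset Strict Implicit. Unset Printing Implicit Defensive.
Import Order.TTheory GRing.Theory Num.Theory.
Local Open Scope classical_set_scope.
Local Open Scope ring_scope.

(* Lebesgue measure on R^2 is the
   completion (Caratheodory extension) of the product of the (Borel)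
   Lebesgue measures on R, so "measurable" below means Lebesgue measurable. *)
Section Plane.
Context {R : realType}.

Local Notation borel2_measure :=
  ((@lebesgue_measure R \x @lebesgue_measure R)%E :
     {measure set (measurableTypeR R * measurableTypeR R)%type -> \bar R}).

Definition plane : measurableType _ := caratheodory_type (mu_ext borel2_measure).

Definition lebesgue2 : {measure set plane -> \bar R} :=
  @completed_measure_extension _ _ _ borel2_measure.

Definition lmeasurable (A : set plane) := measurable A.

Definition edist (y z : plane) : R :=
  Num.sqrt ((y.1 - z.1) ^+ 2 + (y.2 - z.2) ^+ 2).

Definition diam (A : set plane) : R :=
  sup [set edist y z | y in A & z in A].

Definition bounded2 (A : set plane) :=
  exists M : R, forall y, A y -> `|y.1| <= M /\ `|y.2| <= M.

Definition diff_basis (B : plane -> set (set plane)) :=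
  forall x : plane,
    (forall A, B x A ->
       [/\ bounded2 A, lmeasurable A, (0 < lebesgue2 A)%E & A x]) /\
    exists S : nat -> set plane,
      (forall k, B x (S k)) /\ (fun k => diam (S k)) @ \oo --> 0.

Definition sub_basis (B H : plane -> set (set plane)) := forall x, B x `<=` H x.

Definition L1 (f : plane -> R) := lebesgue2.-integrable setT (EFin \o f).

Definition avg (f : plane -> R) (A : set plane) : \bar R :=
  ((fine (lebesgue2 A))^-1)%:E * (\int[lebesgue2]_(y in A) (f y)%:E)%E.

Definition upper_der (B : plane -> set (set plane)) (f : plane -> R) (x : plane)
  : \bar R :=
  ereal_inf [set ereal_sup [set avg f A | A in [set A | B x A /\ diam A < d]]
            | d in [set d : R | 0 < d]].

Definition lower_der (B : plane -> set (set plane)) (f : plane -> R) (x : plane)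
  : \bar R :=
  ereal_sup [set ereal_inf [set avg f A | A in [set A | B x A /\ diam A < d]]
            | d in [set d : R | 0 < d]].

Definition FB (B : plane -> set (set plane)) (f : plane -> R) :=
  L1 f /\ {ae lebesgue2, forall x, upper_der B f x = (f x)%:E /\
                                   lower_der B f x = (f x)%:E}.

Record rotation2 := Rot2 { rc : R; rs : R; _ : rc ^+ 2 + rs ^+ 2 = 1 }.

Definition rot_about (g : rotation2) (x y : plane) : plane :=
  (x.1 + (rc g * (y.1 - x.1) - rs g * (y.2 - x.2)),
   x.2 + (rs g * (y.1 - x.1) + rc g * (y.2 - x.2))).

Definition rot_basis (B : plane -> set (set plane)) (g : rotation2) : plane -> set (set plane) :=
  fun x => [set rot_about g x @` A | A in B x].

Definition W_set (B H : plane -> set (set plane)) (E : set rotation2) :=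
  exists f, L1 f /\
    (forall g, E g -> ~ FB (rot_basis B g) f) /\
    (forall g, ~ E g -> FB (rot_basis H g) f).

Definition Wplus_set (B H : plane -> set (set plane)) (E : set rotation2) :=
  exists f, L1 f /\ (forall x, 0 <= f x) /\
    (forall g, E g -> ~ FB (rot_basis B g) f) /\
    (forall g, ~ E g -> FB (rot_basis H g) f).

Definition R_set (B H : plane -> set (set plane)) (E : set rotation2) :=
  exists f, L1 f /\
    (forall g, E g -> {ae lebesgue2, forall x, upper_der (rot_basis B g) f x = +oo%E}) /\
    (forall g, ~ E g -> FB (rot_basis H g) f).

Definition Rplus_set (B H : plane -> set (set plane)) (E : set rotation2) :=
  exists f, L1 f /\ (forall x, 0 <= f x) /\
    (forall g, E g -> {ae lebesgue2, forall x, upper_der (rot_basis B g) f x = +oo%E}) /\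
    (forall g, ~ E g -> FB (rot_basis H g) f).

End Plane.
Arguments rotation2 R : clear implicits.

From HB Require Import structures.
From mathcomp Require Import all_boot all_order all_algebra.
From mathcomp Require Import all_classical all_reals all_analysis.
From mathcomp Require Import ring lra measurable_realfun.
Set Implicit Arguments. Unset Strict Implicit. Unset Printing Implicit Defensive.
Import Order.TTheory GRing.Theory Num.Theory.
Import HBNNSimple.
Local Open Scope classical_set_scope.
Local Open Scope ring_scope.

(* Let f_k witness that E_k is an R-set.  Glue the functions c_k f_k on the
   vertical strips k <= x.1 < k + 1, with weights c_k > 0 chosen so that
   sum_k c_k ||f_k||_1 < oo.  A set of a rotated basis at x lies within its
   diameter of x, so off the strip boundaries (a null set) the derivatives of
   the glued function at x are c_k times those of f_k.  Hence for a rotation in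
   E_k the upper derivative is +oo on a strip of positive measure, while for a
   rotation outside every E_k the glued function is differentiated a.e. *)

Section ScaledIntegral.
Context {R : realType}.
Local Open Scope ereal_scope.

Lemma gt0_muleBr (c : R) (a b : \bar R) : (0 < c)%R ->
  c%:E * (a - b) = c%:E * a - c%:E * b.
Proof.
move=> c0.
have cy : c%:E * +oo = +oo by rewrite gt0_muley ?lte_fin.
have cNy : c%:E * -oo = -oo by rewrite gt0_muleNy ?lte_fin.
case: a => [a||]; case: b => [b||] //=;
  rewrite ?cy ?cNy -?EFinM ?mulrBr ?EFinB //=
          ?addeNy ?addNye ?addye ?addey ?cy ?cNy.
Qed.

Lemma gt0_integralZl d (T : measurableType d) (mu : {measure set T -> \bar R})
  (D : set T) (f : T -> \bar R) (c : R) : (0 < c)%R ->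
  \int[mu]_(x in D) (c%:E * f x) = c%:E * \int[mu]_(x in D) f x.
Proof.
move=> c0.
have ic0 : (0 <= c^-1)%R by rewrite invr_ge0 ltW.
have supZ (F : T -> \bar R) :
  ereal_sup [set sintegral mu h | h in [set h : {nnsfun T >-> R} |
     forall x, (h x)%:E <= c%:E * F x]] =
  c%:E * ereal_sup [set sintegral mu h | h in [set h : {nnsfun T >-> R} |
     forall x, (h x)%:E <= F x]].
  rewrite -ereal_sup_pZl //; congr ereal_sup; apply/seteqP; split => t.
  - move=> [h hF <-]; exists (sintegral mu (scale_nnsfun h ic0)).
      exists (scale_nnsfun h ic0) => // x /=.
      by rewrite EFinM lee_pdivrMl // hF.
    rewrite -sintegralrM; apply: eq_sintegral => x /=.
    by rewrite mulrA divff ?mul1r // gt_eqF.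
  - move=> [_ [h hF <-] <-]; exists (scale_nnsfun h (ltW c0)).
      by move=> x /=; rewrite EFinM lee_pmul2l // hF.
    by rewrite -sintegralrM.
rewrite /integral erestrict_scale ge0_funeposM ?ltW // ge0_funenegM ?ltW //.
by rewrite !supZ gt0_muleBr.
Qed.

Lemma ae_exists_gt0 d (T : measurableType d) (mu : {measure set T -> \bar R})
  (S : set T) (Q : T -> Prop) : measurable S -> 0 < mu S ->
  {ae mu, forall x, Q x} -> exists2 x, S x & Q x.
Proof.
move=> mS S0 [N [mN N0 NQ]]; apply: contrapT => noQ.
have SN : S `<=` N by move=> x Sx; apply: NQ => Qx; apply: noQ; exists x.
have : mu S <= 0 by rewrite -N0; apply: le_measure => //; rewrite inE.
by move=> /(lt_le_trans S0); rewrite ltxx.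
Qed.

End ScaledIntegral.

Section RotatedBasis.
Context {R : realType}.
Local Notation P := (@plane R).

Lemma edist_rot_about (g : rotation2 R) (x y z : P) :
  edist (rot_about g x y) (rot_about g x z) = edist y z.
Proof.
case: g => c s cs1; case: x => x1 x2; case: y => y1 y2; case: z => z1 z2.
rewrite /edist /rot_about /=; congr Num.sqrt.
transitivity ((c ^+ 2 + s ^+ 2) * ((y1 - z1) ^+ 2 + (y2 - z2) ^+ 2)).
  by ring.
by rewrite cs1 mul1r.
Qed.

Lemma rot_about_id (g : rotation2 R) (x : P) : rot_about g x x = x.
Proof. by case: x => a b; rewrite /rot_about /= !subrr !mulr0 subrr !addr0. Qed.

Lemma ler_norm1_edist (y z : P) : `|y.1 - z.1| <= edist y z.
Proof.
rewrite /edist -sqrtr_sqr ler_sqrt; last by rewrite addr_ge0 // sqr_ge0.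
by rewrite lerDl sqr_ge0.
Qed.

Lemma bounded2_has_ubound_edist (A : set P) :
  bounded2 A -> has_ubound [set edist y z | y in A & z in A].
Proof.
move=> [M AM]; exists (Num.sqrt (8 * M ^+ 2)) => _ [y Ay [z Az <-]].
rewrite /edist ler_wsqrtr //.
have [y1 y2] := AM _ Ay; have [z1 z2] := AM _ Az.
move: y1 y2 z1 z2; rewrite !ler_norml.
move=> /andP[? ?] /andP[? ?] /andP[? ?] /andP[? ?].
nra.
Qed.

Lemma edist_le_diam (A : set P) (y z : P) :
  bounded2 A -> A y -> A z -> edist y z <= diam A.
Proof.
move=> bA Ay Az; apply: (ub_le_sup (bounded2_has_ubound_edist bA)).
by exists y => //; exists z.
Qed.

Lemma diam_rot_about (g : rotation2 R) (x : P) (A : set P) :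
  diam (rot_about g x @` A) = diam A.
Proof.
rewrite /diam; congr sup; apply/seteqP; split => t.
  move=> [_ [y Ay <-] [_ [z Az <-] <-]].
  by rewrite edist_rot_about; exists y => //; exists z.
move=> [y Ay [z Az <-]]; rewrite -(edist_rot_about g x).
by exists (rot_about g x y); [exists y|exists (rot_about g x z) => //; exists z].
Qed.

Lemma rot_basis_norm1_le_diam (B : P -> set (set P)) (g : rotation2 R) (x : P)
  (A : set P) (y : P) : diff_basis B ->
  rot_basis B g x A -> A y -> `|y.1 - x.1| <= diam A.
Proof.
move=> dB [A0 BA0 <-] [y0 A0y0 <-]; rewrite diam_rot_about.
have [bA0 _ _ A0x] := (dB x).1 A0 BA0.
apply: le_trans (ler_norm1_edist _ _) _.
by rewrite -{2}(rot_about_id g x) edist_rot_about; exact: edist_le_diam.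
Qed.

Lemma rot_basis_small (B : P -> set (set P)) (g : rotation2 R) (x : P) (d : R) :
  diff_basis B -> 0 < d -> exists A, rot_basis B g x A /\ diam A < d.
Proof.
move=> dB d0; have [_ [S [BS /cvgr_lt S0]]] := dB x.
have [N _ SN] := S0 _ d0.
exists (rot_about g x @` S N); split; first by exists (S N).
by rewrite diam_rot_about; apply: SN => /=.
Qed.

End RotatedBasis.

Section Derivatives.
Context {R : realType}.
Local Notation P := (@plane R).
Implicit Types (Bs : P -> set (set P)) (f h : P -> R).

Definition small_avgs Bs f (x : P) (d : R) :=
  [set avg f A | A in [set A | Bs x A /\ diam A < d]].

Lemma eq_avg_in f h (A : set P) : {in A, f =1 h} -> avg f A = avg h A.
Proof.
move=> fh; rewrite /avg; congr (_ * _)%E; apply: eq_integral => y yA.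
by rewrite fh.
Qed.

Lemma avgZ f (c : R) (A : set P) : 0 < c ->
  avg (fun y => c * f y) A = (c%:E * avg f A)%E.
Proof.
move=> c0; rewrite /avg.
under eq_integral do rewrite EFinM.
by rewrite gt0_integralZl // muleCA.
Qed.

Lemma upper_derZ Bs f x (c : R) : 0 < c ->
  upper_der Bs (fun y => c * f y) x = (c%:E * upper_der Bs f x)%E.
Proof.
move=> c0; rewrite /upper_der -ereal_inf_pZl // image_comp.
congr ereal_inf; apply: eq_imagel => d _ /=.
rewrite -ereal_sup_pZl // image_comp; congr ereal_sup; apply: eq_imagel => A _ /=.
exact: avgZ.
Qed.

Lemma lower_derZ Bs f x (c : R) : 0 < c ->
  lower_der Bs (fun y => c * f y) x = (c%:E * lower_der Bs f x)%E.
Proof.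
move=> c0; rewrite /lower_der -ereal_sup_pZl // image_comp.
congr ereal_sup; apply: eq_imagel => d _ /=.
rewrite -ereal_inf_pZl // image_comp; congr ereal_inf; apply: eq_imagel => A _ /=.
exact: avgZ.
Qed.

Section Locality.
Variables (Bs : P -> set (set P)) (f h : P -> R) (x : P) (d0 : R).
Hypothesis d0_gt0 : 0 < d0.
Hypothesis fh : forall A, Bs x A -> diam A < d0 -> {in A, f =1 h}.

Lemma small_avgs_sub d e : d <= d0 -> d <= e ->
  small_avgs Bs f x d `<=` small_avgs Bs h x e.
Proof.
move=> dd0 de _ [A [BA dA] <-]; exists A.
  by split => //; exact: lt_le_trans de.
by apply/esym/eq_avg_in/fh => //; exact: lt_le_trans dd0.
Qed.

Let min_gt0 d : 0 < d -> 0 < Order.min d d0.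
Proof. by move=> d_gt0; rewrite lt_min d_gt0 d0_gt0. Qed.

Let min_lel d : Order.min d d0 <= d.
Proof. by rewrite ge_min lexx. Qed.

Let min_ler d : Order.min d d0 <= d0.
Proof. by rewrite ge_min lexx orbT. Qed.

Lemma le_upper_der_local : (upper_der Bs f x <= upper_der Bs h x)%E.
Proof.
apply: le_ereal_inf_tmp => _ [d d_gt0 <-].
have m_gt0 := min_gt0 d_gt0.
apply: (le_trans (ereal_inf_lbound _)); first by exists (Order.min d d0).
by apply/ereal_sup_le/small_avgs_sub; [exact: min_ler|exact: min_lel].
Qed.

Lemma le_lower_der_local : (lower_der Bs h x <= lower_der Bs f x)%E.
Proof.
apply: ge_ereal_sup => _ [d d_gt0 <-].
have m_gt0 := min_gt0 d_gt0.
apply: le_trans _ (ereal_sup_ubound _); last by exists (Order.min d d0).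
by apply/ereal_inf_le_tmp/small_avgs_sub; [exact: min_ler|exact: min_lel].
Qed.

End Locality.

Lemma der_local Bs f h x (d0 : R) : 0 < d0 ->
  (forall A, Bs x A -> diam A < d0 -> {in A, f =1 h}) ->
  upper_der Bs f x = upper_der Bs h x /\ lower_der Bs f x = lower_der Bs h x.
Proof.
move=> d0_gt0 fh.
have hf A : Bs x A -> diam A < d0 -> {in A, h =1 f}.
  by move=> BA dA y yA; rewrite (fh A).
by split; apply/le_anti/andP; split;
  [apply: le_upper_der_local d0_gt0 fh|apply: le_upper_der_local d0_gt0 hf|
   apply: le_lower_der_local d0_gt0 hf|apply: le_lower_der_local d0_gt0 fh].
Qed.

Lemma der0 Bs x : (forall d, 0 < d -> exists A, Bs x A /\ diam A < d) ->
  upper_der Bs (fun=> 0) x = 0%E /\ lower_der Bs (fun=> 0) x = 0%E.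
Proof.
move=> small.
have avgs0 d : 0 < d -> small_avgs Bs (fun=> 0) x d = [set 0%E].
  move=> d_gt0; have avg0 A : avg (fun=> 0) A = 0%E.
    by rewrite /avg integral0_eq ?mule0.
  apply/seteqP; split => [_ [A _ <-]|_ ->]; first by rewrite avg0.
  by have [A BA] := small d d_gt0; exists A => //; rewrite avg0.
have const (op : set (\bar R) -> \bar R) : op [set 0%E] = 0%E ->
    [set op (small_avgs Bs (fun=> 0) x d) | d in [set d : R | 0 < d]] = [set 0%E].
  move=> op0; apply/seteqP; split => [_ [d d_gt0 <-]|_ ->].
    by rewrite avgs0.
  by exists 1; rewrite /= ?avgs0 ?ltr01.
rewrite /upper_der /lower_der.
by rewrite !const ?ereal_sup1 ?ereal_inf1.
Qed.

End Derivatives.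

Lemma rot_basis_der_local {R : realType} (B : plane -> set (set plane))
  (g : rotation2 R) (x : plane) (f h : plane -> R) (d0 : R) :
  diff_basis B -> 0 < d0 -> (forall y, `|y.1 - x.1| < d0 -> f y = h y) ->
  upper_der (rot_basis B g) f x = upper_der (rot_basis B g) h x /\
  lower_der (rot_basis B g) f x = lower_der (rot_basis B g) h x.
Proof.
move=> dB d0_gt0 fh; apply: (der_local d0_gt0) => A BA dA y /[!inE] Ay.
by apply: fh; apply: le_lt_trans dA; exact: rot_basis_norm1_le_diam dB BA Ay.
Qed.

Section Strips.
Context {R : realType}.
Local Notation P := (@plane R).

Lemma measurableXT (J : set R) :
  measurable J -> measurable (J `*` setT : set P).
Proof.
by move=> mJ; apply: caratheodory_measurable_mu_ext; exact: measurableX.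
Qed.

Lemma lebesgue2XT (J : set R) : measurable J ->
  lebesgue2 (J `*` setT : set P) = (lebesgue_measure J * +oo)%E.
Proof.
move=> mJ; rewrite /lebesgue2 /= /completed_measure_extension.
rewrite measurable_mu_extE; last exact: measurableX.
transitivity (lebesgue_measure J * lebesgue_measure [set: R])%E.
  exact: product_measure1E.
by rewrite -set_itvNyy lebesgue_measure_itv.
Qed.

(* [Num.truncn] vanishes on negative numbers, so strip 0 is the half-plane
   x.1 < 1. *)
Definition strip_idx (x : P) : nat := Num.truncn x.1.

Definition strip (k : nat) : set P := [set x | strip_idx x = k].

Lemma bigcup_strip : \bigcup_k strip k = [set: P].
Proof. by apply/seteqP; split => // x _; exists (strip_idx x). Qed.

Lemma measurable_strip k : measurable (strip k).
Proof.
pose J : set R := if k is 0 then [set` `]-oo, 1[] else [set` `[k%:R, k.+1%:R[].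
have JE t : J t <-> Num.truncn t = k.
  rewrite /J; case: k {J} => [|k] /=; rewrite in_itv /=.
    split => [t1|t0]; first by apply/truncn0Pn; rewrite -ltNge.
    by rewrite ltNge; apply/negP => /truncn0Pn; rewrite t0.
  split => [|tk]; first exact: truncn_def.
  have t1 : 1 <= t by rewrite -truncn_gt0 tk.
  by move: (truncn_eq k.+1 (le_trans ler01 t1)); rewrite tk eqxx => <-.
have -> : strip k = J `*` setT.
  by apply/seteqP; split => x /= => [xk|[/JE//]]; split => //; exact/JE.
apply: measurableXT; rewrite /J; case: k {J JE} => [|k]; exact: measurable_itv.
Qed.

Lemma open_strip_sub k : (`]k%:R, k.+1%:R[ `*` setT : set P) `<=` strip k.
Proof.
by move=> x [/= /andP[/ltW kx xk] _]; apply: truncn_def; rewrite kx.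
Qed.

Lemma lebesgue2_open_strip_gt0 k :
  (0 < lebesgue2 (`]k%:R, k.+1%:R[ `*` setT : set P))%E.
Proof.
rewrite lebesgue2XT ?lebesgue_measure_itv /= ?lte_fin ?ltr_nat ?ltnSn //.
by rewrite gt0_muley // -EFinB lte_fin subr_gt0 ltr_nat.
Qed.

Definition strip_boundary : set P := [set x | exists2 k, (0 < k)%N & x.1 = k%:R].

Lemma ae_not_strip_boundary : {ae lebesgue2, forall x : P, ~ strip_boundary x}.
Proof.
apply: (negligibleS (A := \bigcup_k ([set k%:R] `*` setT : set P))).
  by move=> x /= /contrapT [k _ xk]; exists k => //=; split.
apply: negligible_bigcup => k; exists ([set k%:R] `*` setT : set P); split => //.
  by apply: measurableXT; exact: measurable_set1.
by rewrite lebesgue2XT ?lebesgue_measure_set1 ?mul0e //; exact: measurable_set1.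
Qed.

Lemma strip_idx_locally_constant (x : P) : ~ strip_boundary x ->
  exists2 d0, 0 < d0 &
    forall y : P, `|y.1 - x.1| < d0 -> strip_idx y = strip_idx x.
Proof.
move=> nbx; rewrite /strip_idx.
have [x1|x1] := ltP x.1 1.
  have trunc0 (t : R) : t < 1 -> Num.truncn t = 0%N.
    by move=> t1; apply/truncn0Pn; rewrite -ltNge.
  exists (1 - x.1); first by rewrite subr_gt0.
  move=> y; rewrite ltr_norml => /andP[_]; rewrite ltrD2r => y1.
  by rewrite !trunc0.
have /andP[kx xk] := truncn_itv (le_trans ler01 x1).
set k := Num.truncn x.1 in kx xk *.
have {}kx : k%:R < x.1.
  rewrite lt_neqAle kx andbT; apply/eqP => xk'; apply: nbx; exists k => //.
  by rewrite truncn_gt0.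
exists (Order.min (x.1 - k%:R) (k.+1%:R - x.1)).
  by rewrite lt_min !subr_gt0 kx xk.
move=> y; rewrite lt_min !ltr_norml => /andP[/andP[ky _] /andP[_ yk]].
move: ky yk; rewrite opprB !ltrD2r => ky yk.
by apply: truncn_def; rewrite yk andbT ltW.
Qed.

End Strips.

Section StripGlue.
Context {R : realType}.
Local Notation P := (@plane R).
Variable fs : nat -> P -> R.

Definition glue_weight (k : nat) : R :=
  ((2 ^ k.+1)%:R * (1 + fine (\int[lebesgue2]_x `|(fs k x)%:E|)%E))^-1.

Definition strip_glue (x : P) : R :=
  glue_weight (strip_idx x) * fs (strip_idx x) x.

Lemma glue_weight_gt0 k : 0 < glue_weight k.
Proof.
rewrite invr_gt0 mulr_gt0 ?ltr0n ?expn_gt0 // ltr_pwDl // fine_ge0 //.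
by apply: integral_ge0 => x _; exact: abse_ge0.
Qed.

Lemma strip_glue_ge0 : (forall k x, 0 <= fs k x) -> forall x, 0 <= strip_glue x.
Proof. by move=> fs_ge0 x; rewrite mulr_ge0 ?(ltW (glue_weight_gt0 _)). Qed.

Hypothesis fs_L1 : forall k, L1 (fs k).

Lemma glue_weight_integral_le k :
  ((glue_weight k)%:E * \int[lebesgue2]_x `|(fs k x)%:E|
     <= (1 / (2 ^ k.+1)%:R)%:E)%E.
Proof.
have /integrableP[_ fin] := fs_L1 k.
set I := (\int[lebesgue2]_x `|(fs k x)%:E|)%E in fin *.
have I_ge0 : (0 <= I)%E by apply: integral_ge0 => x _; exact: abse_ge0.
rewrite -[I]fineK ?ge0_fin_numE // -EFinM lee_fin /glue_weight -/I.
rewrite invfM mul1r -mulrA ler_piMr ?invr_ge0 //.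
have I1_gt0 : 0 < 1 + fine I by rewrite ltr_pwDl // fine_ge0.
by rewrite mulrC ler_pdivrMr // mul1r lerDr.
Qed.

Lemma measurable_strip_glue : measurable_fun setT strip_glue.
Proof.
rewrite -bigcup_strip.
apply/measurable_fun_bigcup => k; first exact: measurable_strip.
have mfk : measurable_fun setT (fs k).
  by have /integrableP[/measurable_EFinP] := fs_L1 k.
have mck : measurable_fun setT (fun x => glue_weight k * fs k x).
  exact: measurable_funM.
apply: eq_measurable_fun (measurable_funTS mck).
by move=> x /[!inE] xk; rewrite /strip_glue xk.
Qed.

Lemma integral_strip_glue_le k :
  (\int[lebesgue2]_(x in strip k) `|(strip_glue x)%:E|
     <= (glue_weight k)%:E * \int[lebesgue2]_x `|(fs k x)%:E|)%E.
Proof.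
have ck_gt0 := glue_weight_gt0 k.
have mfk : measurable_fun setT (fun x => `|(fs k x)%:E|%E).
  apply: measurableT_comp; first exact: abse_measurable.
  by have /integrableP[] := fs_L1 k.
rewrite -gt0_integralZl //.
under eq_integral => x /[!inE] xk.
  rewrite /strip_glue xk /= normrM gtr0_norm // EFinM.
  over.
apply: (ge0_subset_integral _ (measurable_strip k) measurableT _ _
  (@subsetT _ _)).
  exact: emeasurable_funM (measurable_cst _) mfk.
by move=> x _; rewrite mule_ge0 ?lee_fin ?(ltW ck_gt0) ?abse_ge0.
Qed.

Lemma strip_glue_L1 : L1 strip_glue.
Proof.
have mglue : measurable_fun setT (fun x => `|(strip_glue x)%:E|%E).
  apply: measurableT_comp; first exact: abse_measurable.
  exact/measurable_EFinP/measurable_strip_glue.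
apply/integrableP; split; first exact/measurable_EFinP/measurable_strip_glue.
rewrite -bigcup_strip.
rewrite ge0_integral_bigcup.
- apply: le_lt_trans (le_lt_trans (epsilon_trick0 xpredT ler01) (ltry _)).
  apply: lee_nneseries => [k _ _|k _].
    by apply: integral_ge0 => x _; exact: abse_ge0.
  exact: le_trans (integral_strip_glue_le k) (glue_weight_integral_le k).
- exact: measurable_strip.
- exact: measurable_funTS mglue.
- by move=> x _; exact: abse_ge0.
- by move=> i j _ _ [x [/= <- <-]].
Qed.

Variables (B : P -> set (set P)) (g : rotation2 R).
Hypothesis dB : diff_basis B.

Lemma strip_glue_der x : ~ strip_boundary x ->
  let k := strip_idx x in
  upper_der (rot_basis B g) strip_glue x =
    ((glue_weight k)%:E * upper_der (rot_basis B g) (fs k) x)%E /\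
  lower_der (rot_basis B g) strip_glue x =
    ((glue_weight k)%:E * lower_der (rot_basis B g) (fs k) x)%E.
Proof.
move=> nbx k; have [d0 d0_gt0 near_x] := strip_idx_locally_constant nbx.
have [-> ->] := rot_basis_der_local g
  (h := fun y => glue_weight k * fs k y) dB d0_gt0
  (fun y xy => congr1 (fun i => glue_weight i * fs i y) (near_x y xy)).
by rewrite upper_derZ ?lower_derZ ?glue_weight_gt0.
Qed.

Lemma strip_glue_not_FB k :
  {ae lebesgue2, forall x, upper_der (rot_basis B g) (fs k) x = +oo%E} ->
  ~ FB (rot_basis B g) strip_glue.
Proof.
move=> fk_oo [_ glue_diff].
have [x /open_strip_sub xk [fk_x [glue_x _] nbx]] :=
  ae_exists_gt0 (measurableXT (measurable_itv _)) (lebesgue2_open_strip_gt0 k)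
    (filterS3 _ (fun x a b c => And3 a b c)
      fk_oo glue_diff ae_not_strip_boundary).
have [upper_glue _] := strip_glue_der nbx.
move: glue_x; rewrite upper_glue xk fk_x gt0_muley // lte_fin.
exact: glue_weight_gt0.
Qed.

Lemma strip_glue_FB :
  (forall k, FB (rot_basis B g) (fs k)) -> FB (rot_basis B g) strip_glue.
Proof.
move=> fsFB; split; first exact: strip_glue_L1.
apply: filterS2 _ _ (ae_foralln (fun k => (fsFB k).2)) ae_not_strip_boundary.
move=> x fs_x nbx.
have [-> ->] := strip_glue_der nbx; have [-> ->] := fs_x (strip_idx x).
by rewrite -EFinM.
Qed.

End StripGlue.

Lemma countable_bigcup_seq T (F : set (set T)) : countable F ->
  exists E : nat -> set T,
    \bigcup_(A in F) A = \bigcup_k E k /\ forall k, E k = set0 \/ F (E k).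
Proof.
move=> /pfcard_geP[->|/surjfunPex[e eF]].
  by exists (fun=> set0); split => [|k]; [rewrite bigcup_set0 bigcup0|left].
by exists e; split => [|k]; [rewrite eF bigcup_image|right; rewrite eF; exists k].
Qed.

Section WSets.
Context {R : realType}.
Local Notation P := (@plane R).
Variables B H : P -> set (set P).
Hypotheses (dB : diff_basis B) (dH : diff_basis H).

Lemma FB_rot_basis0 (Bs : P -> set (set P)) (g : rotation2 R) :
  diff_basis Bs -> FB (rot_basis Bs g) (fun=> 0).
Proof.
move=> dBs; split; first exact: integrable0.
by apply: aeW => x; apply: der0 => d; exact: rot_basis_small.
Qed.

Lemma R_set0 : R_set B H set0.
Proof.
exists (fun=> 0); split; first exact: integrable0.
by split => g // _; exact: FB_rot_basis0.
Qed.

Lemma Rplus_set0 : Rplus_set B H set0.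
Proof.
exists (fun=> 0); split; first exact: integrable0.
by split => //; split => g // _; exact: FB_rot_basis0.
Qed.

Lemma W_set_bigcup (E : nat -> set (rotation2 R)) :
  (forall k, R_set B H (E k)) -> W_set B H (\bigcup_k E k).
Proof.
move=> /choice[fs fsE]; have fs_L1 k := (fsE k).1.
exists (strip_glue fs); split; first exact: strip_glue_L1.
split => [g [k _ Ekg]|g notE].
  exact: (strip_glue_not_FB dB ((fsE k).2.1 g Ekg)).
apply: (strip_glue_FB fs_L1 dH) => k.
by apply: ((fsE k).2.2 g) => Ekg; apply: notE; exists k.
Qed.

Lemma Wplus_set_bigcup (E : nat -> set (rotation2 R)) :
  (forall k, Rplus_set B H (E k)) -> Wplus_set B H (\bigcup_k E k).
Proof.
move=> /choice[fs fsE]; have fs_L1 k := (fsE k).1.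
exists (strip_glue fs); split; first exact: strip_glue_L1.
split; first by apply: strip_glue_ge0 => k; exact: (fsE k).2.1.
split => [g [k _ Ekg]|g notE].
  exact: (strip_glue_not_FB dB ((fsE k).2.2.1 g Ekg)).
apply: (strip_glue_FB fs_L1 dH) => k.
by apply: ((fsE k).2.2.2 g) => Ekg; apply: notE; exists k.
Qed.

End WSets.

Theorem theorem3 (R : realType) (B H : @plane R -> set (set (@plane R))) :
  diff_basis B -> diff_basis H -> sub_basis B H ->
  (forall F : set (set (rotation2 R)), countable F ->
     (forall E, F E -> R_set B H E) -> W_set B H (\bigcup_(E in F) E)) /\
  (forall F : set (set (rotation2 R)), countable F ->
     (forall E, F E -> Rplus_set B H E) -> Wplus_set B H (\bigcup_(E in F) E)).
Proof.
move=> dB dH _; split => F /countable_bigcup_seq[E [-> EF]] FR.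
- apply: W_set_bigcup => // k.
  by have [->|/FR] := EF k; [exact: R_set0|].
- apply: Wplus_set_bigcup => // k.
  by have [->|/FR] := EF k; [exact: Rplus_set0|].
Qed.
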